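(* Let $\Sigma$ be a canonical ambiguous experiment. Then $\tau^{*} \in BR(\Sigma)$ if and only if there exists $\pi \in K^{*}(\Sigma)$ such that for all $a, b \in A$, $$\sum_{\omega \in \Omega} \pi(\omega,a)\,[u_r(b,\omega) - u_r(a,\omega)] \le 0.$$
   Context: Setting: $\Omega$ is a finite set of states, $A$ a finite set of receiver actions, $u_r: A \times \Omega \to \mathbb{R}$ the receiver's payoff. $P \subseteq \Delta(\Omega)$ is a nonempty closed convex set of priors; the receiver has maxmin expected utility preferences. A canonical experiment is $\sigma: \Omega \to \Delta(A)$; a canonical ambiguous experiment is a nonempty closed convex set $\Sigma$ of canonical experiments. A receiver strategy is $\tau: A \to \Delta(A)$. $u_r(p,\sigma,\tau) = \sum_{\omega,m,a} p(\omega)\sigma(m\mid\omega)\tau(a\mid m)u_r(a,\omega)$, $U_r(\Sigma,\tau) = \min_{p \in P}\min_{\sigma \in \Sigma} u_r(p,\sigma,\tau)$, and $BR(\Sigma) = \arg\max_{\tau} U_r(\Sigma,\tau)$ over all $\tau: A \to \Delta(A)$. The obedient strategy $\tau^{*}$ is $\tau^{*}(a\mid a) = 1$ for all $a$. For $p \in P$, $\sigma \in \Sigma$, $\pi^{(p,\sigma)} \in \Delta(\Omega \times A)$ is $\pi^{(p,\sigma)}(\omega,a) = p(\omega)\sigma(a\mid\omega)$; $\Pi(\Sigma) = \{\pi^{(p,\sigma)} : p \in P, \sigma \in \Sigma\}$; $\overline{co}(\Pi(\Sigma))$ is its closed convex hull; and $K^{*}(\Sigma) = \arg\min_{\pi \in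 \overline{co}(\Pi(\Sigma))} \sum_{a,\omega} \pi(\omega,a) u_r(a,\omega)$. *)

From HB Require Import structures.
From mathcomp Require Import all_boot all_order all_algebra.
From mathcomp Require Import all_classical all_reals all_analysis.
Import numFieldNormedType.Exports.
Set Implicit Arguments. Unset Strict Implicit. Unset Printing Implicit Defensive.
Import Order.TTheory GRing.Theory Num.Theory.
Local Open Scope classical_set_scope.
Local Open Scope ring_scope.

Section Model.
Variables (R : realType) (Omega A : finType).

Definition is_dist (T : finType) (p : T -> R) : Prop :=
  (forall t, 0 <= p t) /\ \sum_(t : T) p t = 1.

Definition convex_fset (T : Type) (S : set (T -> R)) : Prop :=
  forall x y (t : R), S x -> S y -> 0 <= t <= 1 ->
    S (fun z => t * x z + (1 - t) * y z).

Definition convex_exp (S : set (Omega -> A -> R)) : Prop :=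
  forall x y (t : R), S x -> S y -> 0 <= t <= 1 ->
    S (fun w a => t * x w a + (1 - t) * y w a).

Definition is_experiment (s : Omega -> A -> R) : Prop :=
  forall w, is_dist (s w).

Definition is_strategy (tau : A -> A -> R) : Prop :=
  forall m, is_dist (tau m).

Definition ur (u : A -> Omega -> R) (p : Omega -> R) (s : Omega -> A -> R)
  (tau : A -> A -> R) : R :=
  \sum_(w : Omega) \sum_(m : A) \sum_(a : A) p w * s w m * tau m a * u a w.

(* U_r(Sigma, tau) = min_{p in P} min_{sigma in Sigma} u_r(p, sigma, tau);
   written as an infimum (attained when P, Sigma are nonempty compact) *)
Definition Ur (u : A -> Omega -> R) (P : set (Omega -> R))
  (Sigma : set (Omega -> A -> R)) (tau : A -> A -> R) : R :=
  inf [set ur u p s tau | p in P & s in Sigma].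

Definition BR (u : A -> Omega -> R) (P : set (Omega -> R))
  (Sigma : set (Omega -> A -> R)) : set (A -> A -> R) :=
  [set tau | is_strategy tau /\
     forall tau', is_strategy tau' -> Ur u P Sigma tau' <= Ur u P Sigma tau].

Definition obedient : A -> A -> R := fun m a => if m == a then 1 else 0.

Definition joint (p : Omega -> R) (s : Omega -> A -> R) : Omega * A -> R :=
  fun wa => p wa.1 * s wa.1 wa.2.

Definition Pi (P : set (Omega -> R)) (Sigma : set (Omega -> A -> R))
  : set (Omega * A -> R) :=
  [set joint p s | p in P & s in Sigma].

Definition conv_hull (T : Type) (S : set (T -> R)) : set (T -> R) :=
  [set y | exists (n : nat) (l : 'I_n -> R) (x : 'I_n -> T -> R),
     (forall i, 0 <= l i) /\ \sum_(i < n) l i = 1 /\ (forall i, S (x i)) /\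
     y = (fun z => \sum_(i < n) l i * x i z)].

(* closed convex hull, closure in the pointwise (= Euclidean, since Omega*A is
   finite) topology on Omega*A -> R *)
Definition clco_Pi (P : set (Omega -> R)) (Sigma : set (Omega -> A -> R))
  : set (Omega * A -> R) :=
  @closure {ptws (Omega * A)%type -> R} (conv_hull (Pi P Sigma)).

Definition exp_util (u : A -> Omega -> R) (pi : Omega * A -> R) : R :=
  \sum_(a : A) \sum_(w : Omega) pi (w, a) * u a w.

Definition Kstar (u : A -> Omega -> R) (P : set (Omega -> R))
  (Sigma : set (Omega -> A -> R)) : set (Omega * A -> R) :=
  [set pi | clco_Pi P Sigma pi /\
     forall pi', clco_Pi P Sigma pi' -> exp_util u pi <= exp_util u pi'].

End Model.

From HB Require Import structures.
From mathcomp Require Import all_boot all_order all_algebra.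
From mathcomp Require Import all_classical all_reals all_analysis.
From mathcomp Require Import ring lra.
Import numFieldNormedType.Exports.
Import Order.TTheory GRing.Theory Num.Theory.
Set Implicit Arguments. Unset Strict Implicit. Unset Printing Implicit Defensive.
Local Open Scope classical_set_scope.
Local Open Scope ring_scope.

(* For a joint distribution pi, let g(pi) be the vector, indexed by pairs (a, b), of
   the gains of the deviations "play b when a is recommended" over the value v of the
   obedient strategy tau*.  A linear function of pi has the same infimum on the
   closed convex hull K of Pi(Sigma) as on Pi(Sigma), where U_r is computed.  Hence an
   obedient pi in K*(Sigma) bounds U_r(Sigma, tau) by the payoff of tau at pi, which
   obedience bounds by the payoff of tau* at pi, which minimality bounds by v.
   Conversely, minimize over the compact set K the squared distance of g(pi) to the
   nonpositive orthant.  If the minimum is zero, the minimizer lies in K*(Sigma) and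
   is obedient.  Otherwise the first-order condition at the minimizer gives weights
   lambda >= 0 and eps > 0 with lambda . g >= eps on Pi(Sigma), so the lambda-mixture
   of the deviations earns at least v + eps against every prior and experiment, and
   tau* is not a best response. *)

Lemma continuous_closure_in_closed (T U : topologicalType) (f : T -> U)
    (H : set T) (D : set U) :
  continuous f -> closed D -> (forall z, H z -> D (f z)) ->
  forall z, closure H z -> D (f z).
Proof.
move=> fc Dc HD z /(closureS HD).
have : closed (f @^-1` D) by apply: preimage_closed => // ? _; exact: fc.
by move/closure_id => <-.
Qed.

Lemma cvg_ptws (R : realType) (I : choiceType) (F : set_system (I -> R))
    (f : I -> R) : Filter F ->
  (forall i, (fun g => g i) @ F --> f i) -> F --> (f : {ptws I -> R}).
Proof.
move=> FF Ff; apply/(@cvg_sup _ _ (fun i => Topological.class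
    (initial_topology (fun f : I -> R => f i)))) => i.
rewrite cvg_image; last by rewrite eqEsubset; split=> v // _; exists (cst v).
move=> W /= /Ff; rewrite ?nbhs_simpl => Q; exists (@^~ i @^-1` W) => //.
by rewrite eqEsubset; split => [j [? + <-//]|j Wj]; exists (fun _ => j).
Qed.

Section Expectation.
Variables (R : realType) (X : finType).
Local Notation T := {ptws X -> R}.

Definition expect (z c : X -> R) : R := \sum_(x : X) z x * c x.

Definition mix (t : R) (z y : X -> R) : X -> R := fun x => (1 - t) * z x + t * y x.

Lemma expect_continuous c : continuous (fun z : T => expect z c).
Proof.
apply: continuous_big => [|x _ z]; first exact: add_continuous.
apply: continuousM; last exact: cst_continuous.
exact: (@proj_continuous X (fun _ : X => R) x).
Qed.

Lemma mix_continuous t y : continuous (fun z : T => mix t z y : T).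
Proof.
move=> z.
have hx x : (fun z' : T => mix t z' y x) @ z --> mix t z y x.
  apply: (continuousD (f := fun z' : T => (1 - t) * z' x) (g := fun _ => t * y x));
    last exact: cst_continuous.
  apply: (continuousM (s := fun _ => 1 - t) (t := fun z' : T => z' x));
    first exact: cst_continuous.
  exact: (@proj_continuous X (fun _ : X => R) x).
exact: (@cvg_ptws R X ((fun z' : T => mix t z' y : X -> R) @ nbhs z) (mix t z y) _ hx).
Qed.

Lemma expect_mix t z y c : expect (mix t z y) c = (1 - t) * expect z c + t * expect y c.
Proof.
rewrite /expect !mulr_sumr -big_split; apply: eq_bigr => x _ /=.
by rewrite mulrDl !mulrA.
Qed.

Lemma expect_combl n (l : 'I_n -> R) (z : 'I_n -> X -> R) c :
  expect (fun x => \sum_(i < n) l i * z i x) c = \sum_(i < n) l i * expect (z i) c.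
Proof.
rewrite /expect; under eq_bigr do rewrite mulr_suml.
rewrite exchange_big; apply: eq_bigr => i _ /=.
by rewrite mulr_sumr; apply: eq_bigr => x _; rewrite mulrA.
Qed.

Lemma expect_combr (I : finType) (k : I -> R) (c : I -> X -> R) z :
  expect z (fun x => \sum_(i : I) k i * c i x) = \sum_(i : I) k i * expect z (c i).
Proof.
rewrite /expect; under eq_bigr do rewrite mulr_sumr.
rewrite exchange_big; apply: eq_bigr => i _ /=.
by rewrite mulr_sumr; apply: eq_bigr => x _; rewrite mulrCA.
Qed.

Lemma conv_hull_mix (S : set (X -> R)) z y t :
  conv_hull S z -> S y -> 0 <= t <= 1 -> conv_hull S (mix t z y).
Proof.
move=> [n [l [x [l0 [l1 [Sx ->]]]]]] Sy /andP[t0 t1].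
exists n.+1, (fun i => if unlift ord0 i is Some j then (1 - t) * l j else t).
exists (fun i => if unlift ord0 i is Some j then x j else y).
split; [|split; [|split]].
- move=> i; case: (unlift ord0 i) => [j|] //.
  by apply: mulr_ge0 => //; rewrite subr_ge0.
- rewrite big_ord_recl unlift_none.
  under eq_bigr do rewrite liftK.
  by rewrite -mulr_sumr l1 mulr1 addrC subrK.
- by move=> i; case: (unlift ord0 i).
- apply/funext => w; rewrite big_ord_recl unlift_none /mix.
  under [in RHS]eq_bigr do rewrite liftK.
  rewrite addrC mulr_sumr; congr (_ + _); apply: eq_bigr => i _.
  by rewrite mulrA.
Qed.

Variable S : set (X -> R).
Local Notation K := (@closure T (conv_hull S)).

Lemma subset_closure_hull : S `<=` K.
Proof.
move=> z Sz; apply: subset_closure.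
exists 1%N, (fun _ => 1), (fun _ => z); split; [|split; [|split]] => //.
- by rewrite big_ord1.
- by apply/funext => x; rewrite big_ord1 mul1r.
Qed.

Lemma closure_hull_mix z y t : K z -> S y -> 0 <= t <= 1 -> K (mix t z y).
Proof.
move=> Kz Sy t01.
apply: (@continuous_closure_in_closed T T _ (conv_hull S) K (@mix_continuous t y)) Kz.
  exact: closed_closure.
by move=> w Hw; apply: subset_closure; exact: conv_hull_mix.
Qed.

Lemma closure_hull_expect_ge c c0 :
  (forall z, S z -> c0 <= expect z c) -> forall z, K z -> c0 <= expect z c.
Proof.
move=> Sc z Kz.
have hull_ge : forall w, conv_hull S w -> c0 <= expect w c.
  move=> _ [n [l [x [l0 [l1 [Sx ->]]]]]].
  rewrite expect_combl -[c0]mul1r -l1 mulr_suml; apply: ler_sum => i _.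
  by apply: ler_wpM2l => //; exact: Sc.
exact: (@continuous_closure_in_closed T R _ (conv_hull S) [set r | c0 <= r]
  (@expect_continuous c) (@closed_ge R c0) hull_ge z Kz).
Qed.

Lemma closure_hull_box :
  (forall z x, S z -> 0 <= z x <= 1) -> forall z x, K z -> 0 <= z x <= 1.
Proof.
move=> Sbox z x Kz.
have coordE c z' : z' x * c = expect z' (fun y => (y == x)%:R * c).
  rewrite /expect (bigD1 x) //= eqxx mul1r big1 ?addr0 // => y /negbTE ->.
  by rewrite mul0r mulr0.
have lb c c0 : (forall z', S z' -> c0 <= z' x * c) -> c0 <= z x * c.
  by move=> h; rewrite coordE; apply: closure_hull_expect_ge Kz => z' /h; rewrite coordE.
have z0 : 0 <= z x * 1 by apply: lb => z' /(Sbox _ x) /andP[+ _]; rewrite mulr1.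
have z1 : -1 <= z x * -1 by apply: lb => z' /(Sbox _ x) /andP[_]; rewrite mulrN1 lerN2.
by apply/andP; split; lra.
Qed.

Lemma closure_hull_compact :
  (forall z x, S z -> 0 <= z x <= 1) -> compact (K : set T).
Proof.
move=> Sbox.
have box_compact := @tychonoff X (fun _ => R) (fun _ => `[0, 1]%classic)
  (fun _ => @segment_compact R 0 1).
apply: (subclosed_compact _ box_compact); first exact: closed_closure.
by move=> z Kz x /=; rewrite in_itv /=; apply: closure_hull_box.
Qed.

End Expectation.

Lemma max0_sqrD (R : realDomainType) (x y : R) :
  Order.max (x + y) 0 ^+ 2 <= Order.max x 0 ^+ 2 + 2 * Order.max x 0 * y + y ^+ 2.
Proof. rewrite !expr2; case: (lerP (x + y) 0) => h1; case: (lerP x 0) => h2; nra. Qed.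

Lemma max0_mulr (R : realDomainType) (x : R) : Order.max x 0 * x = Order.max x 0 ^+ 2.
Proof. by rewrite expr2; case: (lerP x 0) => h; rewrite ?mul0r. Qed.

Lemma ge0_of_linear_perturbation (R : realFieldType) (a b : R) :
  (forall t, 0 < t <= 1 -> 0 <= a + t * b) -> 0 <= a.
Proof.
move=> h; rewrite leNgt; apply/negP => a_lt0.
have b_le := ler_norm b; have b_ge0 := normr_ge0 b.
have D_gt0 : 0 < - a + `|b| by lra.
pose t := - a / (- a + `|b|).
have t01 : 0 < t <= 1.
  rewrite divr_gt0 ?ler_pdivrMr //=; lra.
have := h t t01.
have -> : a + t * b = (a * (- a + `|b|) - a * b) / (- a + `|b|).
  by rewrite /t; field; lra.
rewrite pmulr_lge0 ?invr_gt0 //; nra.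
Qed.

Section OrthantAlternative.
Variables (R : realType) (T : topologicalType) (I : finType).
Variables (K S : set T) (F : I -> T -> R).
Hypothesis K_compact : compact K.
Hypothesis K_neq0 : K !=set0.
Hypothesis F_continuous : forall i, continuous (F i).
Hypothesis K_mix : forall z y t, K z -> S y -> 0 <= t <= 1 ->
  exists2 zt, K zt & forall i, F i zt = (1 - t) * F i z + t * F i y.

Local Notation pos x := (Order.max x 0).

(* squared distance from (F i z)_i to the nonpositive orthant *)
Definition penalty (z : T) : R := \sum_(i : I) pos (F i z) ^+ 2.

Lemma penalty_continuous : continuous penalty.
Proof.
apply: continuous_big => [|i _ z]; first exact: add_continuous.
have pos_cont : {for z, continuous (fun z => pos (F i z) : R^o)}.
  apply: (continuous_max (f := F i) (g := fun _ => 0)); first exact: F_continuous.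
  exact: cst_continuous.
exact: (continuousM pos_cont pos_cont).
Qed.

Lemma penalty_first_order z0 : K z0 -> (forall z, K z -> penalty z0 <= penalty z) ->
  forall y, S y -> penalty z0 <= \sum_(i : I) pos (F i z0) * F i y.
Proof.
move=> Kz0 z0_min y Sy.
pose d i := F i y - F i z0.
pose g := \sum_(i : I) pos (F i z0) * d i.
pose Q := \sum_(i : I) d i ^+ 2.
have penaltyE : penalty z0 = \sum_(i : I) pos (F i z0) * F i z0.
  by apply: eq_bigr => i _; rewrite max0_mulr.
suff : 0 <= 2 * g.
  rewrite pmulr_rge0 // => g_ge0; rewrite penaltyE -subr_ge0 -sumrB.
  by under eq_bigr do rewrite -mulrBr.
apply: (ge0_of_linear_perturbation (b := Q)) => t /andP[t_gt0 t_le1].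
have t01 : 0 <= t <= 1 by rewrite ltW.
have [zt Kzt Fzt] := K_mix Kz0 Sy t01.
have penalty_zt : penalty zt <= penalty z0 + t * (2 * g + t * Q).
  have -> : penalty z0 + t * (2 * g + t * Q) =
      \sum_(i : I) (pos (F i z0) ^+ 2 + 2 * pos (F i z0) * (t * d i) + (t * d i) ^+ 2).
    rewrite /penalty /g /Q mulrDr !mulr_sumr -!big_split /=.
    by apply: eq_bigr => i _; ring.
  apply: ler_sum => i _; rewrite Fzt.
  have -> : (1 - t) * F i z0 + t * F i y = F i z0 + t * d i by rewrite /d; ring.
  exact: max0_sqrD.
have := le_trans (z0_min _ Kzt) penalty_zt.
by rewrite lerDl pmulr_rge0.
Qed.

Lemma orthant_alternative :
  (exists2 z, K z & forall i, F i z <= 0) \/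
  exists2 lam : I -> R, is_dist lam &
    exists2 eps : R, 0 < eps & forall y, S y -> eps <= \sum_(i : I) lam i * F i y.
Proof.
have [z0 /set_mem Kz0 z0_min] :=
  compact_EVT_min K_neq0 K_compact (continuous_subspaceT penalty_continuous).
have {}z0_min z : K z -> penalty z0 <= penalty z by move/mem_set; exact: z0_min.
case: (boolP [forall i, F i z0 <= 0]) => [/forallP|/forallPn [i0]]; first by left; exists z0.
rewrite -ltNge => Fi0_gt0; right.
have pos_ge0 i : 0 <= pos (F i z0) by rewrite le_max lexx orbT.
have pos_i0 : pos (F i0 z0) = F i0 z0 by rewrite max_l // ltW.
pose L := \sum_(i : I) pos (F i z0).
have L_gt0 : 0 < L.
  by rewrite /L (bigD1 i0) //= pos_i0 ltr_pwDl // sumr_ge0.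
have penalty_gt0 : 0 < penalty z0.
  rewrite /penalty (bigD1 i0) //= pos_i0 ltr_pwDl ?exprn_gt0 //.
  by apply: sumr_ge0 => i _; rewrite sqr_ge0.
exists (fun i => pos (F i z0) / L).
  split=> [i|]; first by rewrite divr_ge0 // ltW.
  by rewrite -mulr_suml divff // gt_eqF.
exists (penalty z0 / L); first exact: divr_gt0.
move=> y /(penalty_first_order Kz0 z0_min) h.
under eq_bigr do rewrite mulrAC.
by rewrite -mulr_suml ler_pM2r // invr_gt0.
Qed.

End OrthantAlternative.

Lemma dist_le1 (R : realType) (T : finType) (p : T -> R) :
  is_dist p -> forall t, 0 <= p t <= 1.
Proof.
move=> [p_ge0 p_sum1] t; rewrite p_ge0 -p_sum1 (bigD1 t) //= lerDl.
exact: sumr_ge0.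
Qed.

Lemma dist_inhabited (R : realType) (T : finType) (p : T -> R) :
  is_dist p -> exists t : T, 0 < p t.
Proof.
move=> [p_ge0 p_sum1].
have [|t /andP[_ pt_gt0]] := @psumr_neq0P R T predT p (fun t _ => p_ge0 t).
  by rewrite p_sum1; apply/eqP; exact: oner_neq0.
by exists t.
Qed.

Lemma lerNnorm_mul (R : realDomainType) (q r : R) : 0 <= q <= 1 -> - `|r| <= q * r.
Proof.
move=> /andP[q_ge0 q_le1]; have := ler_norm r; have := ler_norm (- r).
rewrite normrN => Nr_le r_le; nra.
Qed.

Section Persuasion.
Variables (R : realType) (Omega A : finType) (u : A -> Omega -> R).
Variables (P : set (Omega -> R)) (Sigma : set (Omega -> A -> R)).
Hypothesis P_dist : forall p, P p -> is_dist p.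
Hypothesis Sigma_exp : forall s, Sigma s -> is_experiment s.
Hypothesis P_neq0 : P !=set0.
Hypothesis Sigma_neq0 : Sigma !=set0.

Local Notation K := (clco_Pi P Sigma).
Local Notation obedient := (@obedient R A).

Definition payoff (tau : A -> A -> R) : Omega * A -> R :=
  fun wm => \sum_(a : A) tau wm.2 a * u a wm.1.

Definition pure (f : A -> A) : A -> A -> R := fun m a => if f m == a then 1 else 0.

Definition deviation (a b : A) : A -> A -> R := pure (fun m => if m == a then b else m).

Lemma sum_pure f m (g : A -> R) : \sum_(c : A) pure f m c * g c = g (f m).
Proof.
rewrite (bigD1 (f m)) //= /pure eqxx mul1r big1 ?addr0 // => c.
by rewrite eq_sym => /negbTE ->; rewrite mul0r.
Qed.

Lemma pure_strategy f : is_strategy (pure f).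
Proof.
move=> m; split=> [a|]; first by rewrite /pure; case: eqP.
by under eq_bigr do rewrite -[pure f m _]mulr1; rewrite sum_pure.
Qed.

Lemma payoff_pure f w m : payoff (pure f) (w, m) = u (f m) w.
Proof. exact: sum_pure. Qed.

Lemma payoff_obedient w m : payoff obedient (w, m) = u m w.
Proof. exact: (payoff_pure id). Qed.

Lemma deviation_refl a : deviation a a = obedient.
Proof. by apply/funext => m; rewrite /deviation /pure; case: eqP => [->|]. Qed.

Lemma is_strategy_mix (I : finType) (lam : I -> R) (ts : I -> A -> A -> R) :
  is_dist lam -> (forall i, is_strategy (ts i)) ->
  is_strategy (fun m a => \sum_(i : I) lam i * ts i m a).
Proof.
move=> [lam_ge0 lam_sum1] ts_strat m; split=> [a|].
  by apply: sumr_ge0 => i _; rewrite mulr_ge0 //; case: (ts_strat i m).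
rewrite exchange_big -[RHS]lam_sum1; apply: eq_bigr => i _.
by rewrite -mulr_sumr (ts_strat i m).2 mulr1.
Qed.

Lemma expectE (z c : Omega * A -> R) :
  expect z c = \sum_(w : Omega) \sum_(m : A) z (w, m) * c (w, m).
Proof. by rewrite pair_bigA; apply: eq_bigr => -[w m]. Qed.

Lemma ur_expect p s tau : ur u p s tau = expect (joint p s) (payoff tau).
Proof.
rewrite /ur expectE; apply: eq_bigr => w _; apply: eq_bigr => m _.
by rewrite /joint /payoff mulr_sumr; apply: eq_bigr => a _; rewrite !mulrA.
Qed.

Lemma exp_util_expect pi : exp_util u pi = expect pi (payoff obedient).
Proof.
rewrite /exp_util expectE exchange_big; apply: eq_bigr => w _.
by apply: eq_bigr => m _; rewrite payoff_obedient.
Qed.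

Lemma ur_mix (I : finType) (lam : I -> R) (ts : I -> A -> A -> R) p s :
  ur u p s (fun m a => \sum_(i : I) lam i * ts i m a) =
  \sum_(i : I) lam i * ur u p s (ts i).
Proof.
under eq_bigr do rewrite ur_expect; rewrite ur_expect -expect_combr.
congr expect; apply/funext => -[w m]; rewrite /payoff.
under eq_bigr do rewrite mulr_suml; rewrite exchange_big.
by apply: eq_bigr => i _; rewrite mulr_sumr; apply: eq_bigr => a _; rewrite mulrA.
Qed.

Lemma expect_payoff_gain tau pi : is_strategy tau ->
  expect pi (payoff tau) - expect pi (payoff obedient) =
  \sum_(m : A) \sum_(b : A) tau m b * \sum_(w : Omega) pi (w, m) * (u b w - u m w).
Proof.
move=> tau_strat; rewrite !expectE -sumrB; under eq_bigr do rewrite -sumrB.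
rewrite exchange_big; apply: eq_bigr => m _.
have gain w : payoff tau (w, m) - payoff obedient (w, m) =
    \sum_(b : A) tau m b * (u b w - u m w).
  rewrite payoff_obedient -[in LHS](mul1r (u m w)) -(tau_strat m).2 mulr_suml.
  by rewrite /payoff /= -sumrB; apply: eq_bigr => b _; rewrite mulrBr.
under eq_bigr do rewrite -mulrBr gain mulr_sumr.
rewrite exchange_big; apply: eq_bigr => b _; rewrite mulr_sumr.
by apply: eq_bigr => w _; rewrite mulrCA.
Qed.

Lemma expect_deviation_gain a b pi :
  expect pi (payoff (deviation a b)) - expect pi (payoff obedient) =
  \sum_(w : Omega) pi (w, a) * (u b w - u a w).
Proof.
rewrite expect_payoff_gain; last exact: pure_strategy.
rewrite /deviation (bigD1 a) //= sum_pure /= eqxx [X in _ + X]big1 ?addr0 // => m m_neq_a.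
by rewrite sum_pure /= (negbTE m_neq_a) big1 // => w _; rewrite subrr mulr0.
Qed.

Lemma joint_box p s : P p -> Sigma s -> forall x, 0 <= joint p s x <= 1.
Proof.
move=> Pp Ss [w m]; rewrite /joint /=.
have /andP[p0 p1] := dist_le1 (P_dist Pp) w.
have /andP[s0 s1] := dist_le1 (Sigma_exp Ss w) m.
by rewrite mulr_ge0 //= -[1]mulr1 ler_pM.
Qed.

Lemma Pi_sub_clco : Pi P Sigma `<=` K.
Proof. exact: subset_closure_hull. Qed.

Lemma clco_Pi_compact : compact (K : set {ptws (Omega * A)%type -> R}).
Proof. by apply: closure_hull_compact => _ x [p Pp [s Ss <-]]; exact: joint_box. Qed.

Lemma Ur_le_ur tau p s : is_strategy tau -> P p -> Sigma s ->
  Ur u P Sigma tau <= ur u p s tau.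
Proof.
move=> tau_strat Pp Ss; apply: ge_inf; last by exists p => //; exists s.
exists (- \sum_(w : Omega) \sum_(m : A) \sum_(a : A) `|u a w|).
move=> _ [p' Pp' [s' Ss' <-]]; rewrite /ur -sumrN; apply: ler_sum => w _.
rewrite -sumrN; apply: ler_sum => m _; rewrite -sumrN; apply: ler_sum => a _.
have /andP[p0 p1] := dist_le1 (P_dist Pp') w.
have /andP[s0 s1] := dist_le1 (Sigma_exp Ss' w) m.
have /andP[t0 t1] := dist_le1 (tau_strat m) a.
by apply: lerNnorm_mul; rewrite !mulr_ge0 //= !mulr_ile1 ?mulr_ge0.
Qed.

Lemma Ur_ge tau c0 : (forall p s, P p -> Sigma s -> c0 <= ur u p s tau) ->
  c0 <= Ur u P Sigma tau.
Proof.
move=> ur_ge; have [p0 Pp0] := P_neq0; have [s0 Ss0] := Sigma_neq0.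
apply: lb_le_inf; first by exists (ur u p0 s0 tau); exists p0 => //; exists s0.
by move=> _ [p Pp [s Ss <-]]; exact: ur_ge.
Qed.

Lemma Ur_le_expect tau pi : is_strategy tau -> K pi ->
  Ur u P Sigma tau <= expect pi (payoff tau).
Proof.
move=> tau_strat; apply: closure_hull_expect_ge => _ [p Pp [s Ss <-]].
by rewrite -ur_expect; exact: Ur_le_ur.
Qed.

Lemma actions_neq0 : [set: A] !=set0.
Proof.
have [p Pp] := P_neq0; have [w _] := dist_inhabited (P_dist Pp).
have [s Ss] := Sigma_neq0; have [a _] := dist_inhabited (Sigma_exp Ss w).
by exists a.
Qed.

Lemma clco_Pi_neq0 : K !=set0.
Proof.
have [p Pp] := P_neq0; have [s Ss] := Sigma_neq0.
by exists (joint p s); apply: Pi_sub_clco; exists p => //; exists s.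
Qed.

Definition deviation_gain (v : R) (ab : A * A) (z : {ptws (Omega * A)%type -> R}) : R :=
  expect z (payoff (deviation ab.1 ab.2)) - v.

Lemma deviation_gain_continuous v ab : continuous (deviation_gain v ab).
Proof.
move=> z; apply: (continuousD (g := fun _ => - v)
    (f := fun z : {ptws _ -> R} => expect z (payoff (deviation ab.1 ab.2)))).
  exact: expect_continuous.
exact: cst_continuous.
Qed.

Lemma deviation_gain_mix v ab t z y : deviation_gain v ab (mix t z y) =
  (1 - t) * deviation_gain v ab z + t * deviation_gain v ab y.
Proof. by rewrite /deviation_gain expect_mix; ring. Qed.

Lemma BR_obedient_of_Kstar pi : Kstar u P Sigma pi ->
  (forall a b : A, \sum_(w : Omega) pi (w, a) * (u b w - u a w) <= 0) ->
  BR u P Sigma obedient.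
Proof.
move=> [Kpi pi_min] obedience; split=> [|tau tau_strat]; first exact: (pure_strategy id).
have tau_le : expect pi (payoff tau) <= expect pi (payoff obedient).
  rewrite -subr_le0 expect_payoff_gain //; apply: sumr_le0 => m _; apply: sumr_le0 => b _.
  by rewrite mulr_ge0_le0 //; case: (tau_strat m).
apply: le_trans (le_trans (Ur_le_expect tau_strat Kpi) tau_le) _.
apply: Ur_ge => p s Pp Ss; rewrite ur_expect -!exp_util_expect; apply: pi_min.
by apply: Pi_sub_clco; exists p => //; exists s.
Qed.

Lemma Kstar_of_BR_obedient : BR u P Sigma obedient ->
  exists pi, Kstar u P Sigma pi /\
    forall a b : A, \sum_(w : Omega) pi (w, a) * (u b w - u a w) <= 0.
Proof.
move=> [_ obedient_best]; set v := Ur u P Sigma obedient.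
have v_le z : K z -> v <= expect z (payoff obedient).
  exact: Ur_le_expect (pure_strategy id).
have gain_mix z y t : K z -> Pi P Sigma y -> 0 <= t <= 1 -> exists2 zt, K zt &
    forall ab, deviation_gain v ab zt =
               (1 - t) * deviation_gain v ab z + t * deviation_gain v ab y.
  move=> Kz Py t01; exists (mix t z y); first exact: closure_hull_mix.
  by move=> ab; rewrite deviation_gain_mix.
have [[pi Kpi gain_le0]|[lam lam_dist [eps eps_gt0 eps_le]]] :=
  orthant_alternative clco_Pi_compact clco_Pi_neq0 (@deviation_gain_continuous v) gain_mix.
- exists pi; split.
    split=> // pi' Kpi'; rewrite !exp_util_expect; apply: le_trans (v_le _ Kpi').
    have [a0 _] := actions_neq0; have := gain_le0 (a0, a0).
    by rewrite /deviation_gain /= deviation_refl subr_le0.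
  move=> a b; rewrite -expect_deviation_gain.
  have := gain_le0 (a, b); have := v_le _ Kpi; rewrite /deviation_gain /=; lra.
- pose tau m c := \sum_(ab : A * A) lam ab * deviation ab.1 ab.2 m c.
  have tau_strat : is_strategy tau.
    by apply: is_strategy_mix => // ab; exact: pure_strategy.
  have : v + eps <= Ur u P Sigma tau.
    apply: Ur_ge => p s Pp Ss.
    have Pi_ps : Pi P Sigma (joint p s) by exists p => //; exists s.
    have := eps_le _ Pi_ps.
    have -> : \sum_(ab : A * A) lam ab * deviation_gain v ab (joint p s) = ur u p s tau - v.
      rewrite /deviation_gain /tau ur_mix; under eq_bigr do rewrite mulrBr -ur_expect.
      by rewrite sumrB -mulr_suml lam_dist.2 mul1r.
    lra.
  have := obedient_best tau tau_strat; rewrite -/v; lra.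
Qed.

End Persuasion.

Theorem mainTheorem6 (R : realType) (Omega A : finType)
  (u : A -> Omega -> R) (P : set (Omega -> R))
  (Sigma : set (Omega -> A -> R)) :
  P !=set0 -> @closed {ptws Omega -> R} P -> convex_fset P -> (forall p, P p -> is_dist p) ->
  Sigma !=set0 -> @closed {ptws Omega -> {ptws A -> R}} Sigma -> convex_exp Sigma ->
  (forall s, Sigma s -> is_experiment s) ->
  (BR u P Sigma (@obedient R A) <->
   exists pi, Kstar u P Sigma pi /\
     forall a b : A, \sum_(w : Omega) pi (w, a) * (u b w - u a w) <= 0).
Proof.
move=> P_neq0 _ _ P_dist Sigma_neq0 _ _ Sigma_exp; split.
  exact: Kstar_of_BR_obedient.
by move=> [pi [Kpi obedience]]; exact: BR_obedient_of_Kstar Kpi obedience.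
Qed.
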